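(* Let $K$ be a field, $S=K[x_1,\ldots,x_n]$, and let $I\subset S$ be a monomial ideal minimally generated by $q$ monomials $m_1,\ldots,m_q$. Label each vertex $\ell_{i,j}$ ($1\le i\le j\le q$) of the simplicial complex $\mathbb{M}_q^2$ by the monomial $m_im_j$. Then: (a) $\mathbb{M}_q^2$ supports a free resolution of $I^2$; (b) $\mathbb{M}^2(I)$ supports a free resolution of $I^2$.
   Context: Simplicial complexes: a simplicial complex on a vertex set is a collection of subsets closed under taking subsets; $\langle F_1,\ldots,F_r\rangle$ denotes the complex whose facets (maximal faces) are $F_1,\ldots,F_r$. Definition of $\mathbb{M}_q^2$: take the vertex set $V=\{\ell_{i,j}: 1\le i\le j\le q\}$, let $\mathcal{M}=\{\ell_{i,j}:1\le i<j\le q\}$ and $\mathcal{M}_i=\mathcal{M}\cup\{\ell_{i,i}\}$ for $i\in[q]$. Then $\mathbb{M}_q^2=\langle \mathcal{M}_1,\ldots,\mathcal{M}_q\rangle$. We write $\ell_{j,i}=\ell_{i,j}$. Definition of $\mathbb{M}^2(I)$: label each vertex $\ell_{i,j}$ of $\mathbb{M}_q^2$ with $m_im_j$. For any indices $i,j,u,v\in[q]$ with $\{i,j\}\ne\{u,v\}$ such that $m_im_j\mid m_um_v$: if $m_im_j=m_um_v$ and $i=\min\{i,j,u,v\}$, delete the vertex $\ell_{i,j}$; if $m_im_j\neq m_um_v$, delete the vertex $\ell_{u,v}$. $\mathbb{M}^2(I)$ is the induced subcomplex of $\mathbb{M}_q^2$ on the remaining vertices, with each face labeled by the lcm of the labels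 of its vertices. Supporting a free resolution: given a simplicial complex $\Delta$ whose vertices are labeled by monomials generating an ideal $J$, label each face $\tau$ by $m_\tau=\operatorname{lcm}$ of its vertex labels. $\Delta$ supports a free resolution of $J$ if the homogenization of the (augmented) simplicial chain complex of $\Delta$ with respect to these labels (in the sense of Bayer–Peeva–Sturmfels: the free module in homological degree $i$ has a basis indexed by the $i$-dimensional faces $\tau$, in multidegree $m_\tau$, with differential $\tau\mapsto\sum \pm (m_\tau/m_{\tau\setminus v})\,(\tau\setminus v)$) is a free resolution of $J$. *)

From HB Require Import structures.
From mathcomp Require Import all_boot all_order all_algebra.
From mathcomp Require Import mpoly.
Set Implicit Arguments. Unset Strict Implicit. Unset Printing Implicit Defensive.
Import GRing.Theory.
Local Open Scope ring_scope.

(* A simplicial complex on a finite vertex type V is a predicate on {set V}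
   (its faces); vertices are labeled by monomials, given as exponent vectors
   in 'X_{1..n}; the monomial itself is 'X_[m] in S = {mpoly K[n]}. *)

Section Complex.
Variables (K : fieldType) (n : nat) (V : finType).
Variables (Delta : pred {set V}) (lab : V -> 'X_{1..n}).

Definition face_lab (tau : {set V}) : 'X_{1..n} :=
  foldr (fun v acc => mlcm (lab v) acc) mnm0 (enum tau).

Definition face_sign (v : V) (tau : {set V}) : {mpoly K[n]} :=
  (-1) ^+ #|[set w in tau | (enum_rank w < enum_rank v)%N]|.

(* a k-chain of the homogenized complex: an element of the free S-module with
   basis the k-dimensional faces (#|tau| = k+1), written as its coefficient function *)
Definition is_chain (k : nat) (c : {ffun {set V} -> {mpoly K[n]}}) : Prop :=
  forall tau, c tau != 0 -> (tau \in Delta) /\ #|tau| = k.+1.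

(* homogenized boundary: tau |-> sum_v +- (m_tau / m_{tau \ v}) (tau \ v) *)
Definition bnd (c : {ffun {set V} -> {mpoly K[n]}}) : {ffun {set V} -> {mpoly K[n]}} :=
  [ffun sigma : {set V} => \sum_(v : V | v \notin sigma)
      face_sign v (v |: sigma)
      * 'X_[mnm_sub (face_lab (v |: sigma)) (face_lab sigma)]
      * c (v |: sigma)].

Definition augm (c : {ffun {set V} -> {mpoly K[n]}}) : {mpoly K[n]} :=
  \sum_(v : V) c [set v] * 'X_[lab v].

(* Delta supports a free resolution of the ideal J (given as a subset of S):
   the homogenized chain complex, augmented by augm onto J, is exact. *)
Definition supports_free_resolution (J : {mpoly K[n]} -> Prop) : Prop :=
  (forall p, J p <-> exists c, is_chain 0 c /\ augm c = p)
  /\ (forall c, (is_chain 0 c /\ augm c = 0) <->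
                (exists b, is_chain 1 b /\ bnd b = c))
  /\ (forall k c, (is_chain k.+1 c /\ bnd c = 0) <->
                  (exists b, is_chain k.+2 b /\ bnd b = c)).

End Complex.

(* vertices l_{i,j}, 1 <= i <= j <= q (0-indexed here) *)
Definition Vtx (q : nat) := {p : 'I_q * 'I_q | (p.1 <= p.2)%N}.

Definition vlab (n q : nat) (m : 'I_q -> 'X_{1..n}) (x : Vtx q) : 'X_{1..n} :=
  mnm_add (m (val x).1) (m (val x).2).

Definition Mfacet (q : nat) (i : 'I_q) : {set Vtx q} :=
  [set x : Vtx q | ((val x).1 < (val x).2)%N || (((val x).1 == i) && ((val x).2 == i))].

Definition Mq2 (q : nat) : pred {set Vtx q} :=
  fun tau => [exists i : 'I_q, tau \subset Mfacet i].

Definition deleted (n q : nat) (m : 'I_q -> 'X_{1..n}) (x : Vtx q) : bool :=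
  [exists i : 'I_q, exists j : 'I_q, exists u : 'I_q, exists v : 'I_q,
    [&& [set i; j] != [set u; v],
        lem (mnm_add (m i) (m j)) (mnm_add (m u) (m v)) &
        ([&& mnm_add (m i) (m j) == mnm_add (m u) (m v),
             (i <= j)%N, (i <= u)%N, (i <= v)%N &
             [set (val x).1; (val x).2] == [set i; j]]
         || ((mnm_add (m i) (m j) != mnm_add (m u) (m v))
             && ([set (val x).1; (val x).2] == [set u; v])))]].

Definition M2I (n q : nat) (m : 'I_q -> 'X_{1..n}) : pred {set Vtx q} :=
  fun tau => Mq2 tau && [forall x in tau, ~~ deleted m x].

Definition ideal_sq (K : fieldType) (n q : nat) (m : 'I_q -> 'X_{1..n})
  (p : {mpoly K[n]}) : Prop :=
  exists a : 'I_q -> 'I_q -> {mpoly K[n]},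
    p = \sum_(i < q) \sum_(j < q) a i j * 'X_[mnm_add (m i) (m j)].

Definition minimal_gens (n q : nat) (m : 'I_q -> 'X_{1..n}) : Prop :=
  forall i j : 'I_q, i != j -> ~~ lem (m i) (m j).

From HB Require Import structures.
From mathcomp Require Import all_boot all_order all_algebra.
From mathcomp Require Import mpoly.
From mathcomp Require Import zify ring.
Set Implicit Arguments. Unset Strict Implicit. Unset Printing Implicit Defensive.
Import GRing.Theory.
Local Open Scope ring_scope.

(* Bayer-Peeva-Sturmfels: the homogenized complex of a labelled complex Delta
   is exact as soon as, for every multidegree a, the subcomplex Delta_{<=a} of
   faces whose label divides x^a is acyclic.  Here every nonempty Delta_{<=a}
   is a cone, and the contraction of the cone is lifted to a contracting
   homotopy of the multidegree-a strand of the homogenized complex.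
   In M_q^2 an off-diagonal vertex l_{i,j} (i < j) lies in every facet, so if
   its label divides x^a it is an apex of Delta_{<=a}; otherwise a nonempty
   Delta_{<=a} is a single vertex, since two diagonal vertices l_{i,i},
   l_{k,k} below a put l_{i,k} below a as well.
   For M^2(I), following the deletions from any vertex ends at a surviving
   vertex whose label divides the original one.  If the survivor below l_{i,k}
   is again diagonal, l_{k',k'} with m_k'^2 | m_i m_k, then by minimality of
   the generators the excess sum_c (m_k' - m_i)_c^+ is positive and at most
   half that of k: an infinite descent. *)

Section HomogenizedComplex.
Variables (K : fieldType) (n : nat) (V : finType).
Variables (Delta : pred {set V}) (lab : V -> 'X_{1..n}).

Local Notation fl := (face_lab lab).
Local Notation chain := {ffun {set V} -> {mpoly K[n]}}.
Local Notation rk x := (@enum_rank V x).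

Lemma lem_foldr_mlcm (s : seq V) a :
  lem (foldr (fun v acc => mlcm (lab v) acc) mnm0 s) a = all (fun v => lem (lab v) a) s.
Proof.
elim: s => [|v s IH] /=; first by apply/mnm_lepP => i; rewrite mnm0E.
by rewrite lem_mlcm IH.
Qed.

Lemma lem_face_lab (tau : {set V}) a : lem (fl tau) a = [forall v in tau, lem (lab v) a].
Proof.
rewrite /face_lab lem_foldr_mlcm; apply/allP/forall_inP => H v.
  by move=> vt; apply: H; rewrite mem_enum.
by rewrite mem_enum; apply: H.
Qed.

Lemma face_lab_mono (s t : {set V}) : s \subset t -> lem (fl s) (fl t).
Proof.
move=> st; rewrite lem_face_lab; apply/forall_inP => v vs.
have := lepm_refl (fl t); rewrite lem_face_lab => /forall_inP; apply.
exact: (subsetP st).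
Qed.

Lemma face_lab0 : fl set0 = mnm0.
Proof. by rewrite /face_lab enum_set0. Qed.

Lemma face_lab1 v : fl [set v] = lab v.
Proof. by rewrite /face_lab enum_set1 /= mlcm0. Qed.

Definition fsign (v : V) (tau : {set V}) : K :=
  (-1) ^+ #|[set w in tau | (rk w < rk v)%N]|.

Lemma face_signE v tau : face_sign K n v tau = (fsign v tau)%:MP.
Proof. by rewrite /face_sign /fsign rmorphXn rmorphN1. Qed.

Lemma fsignK v tau : fsign v tau * fsign v tau = 1.
Proof. by rewrite /fsign -exprD -signr_odd oddD addbb. Qed.

Lemma fsignU1 (x v : V) (t : {set V}) : x \notin t ->
  fsign v (x |: t) = (-1) ^+ (rk x < rk v)%N * fsign v t.
Proof.
move=> xt; rewrite /fsign -exprD; congr (_ ^+ _).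
case Px: (rk x < rk v)%N.
  have -> : [set w in x |: t | (rk w < rk v)%N] = x |: [set w in t | (rk w < rk v)%N].
    apply/setP => w; rewrite !inE; case: eqP => [->|] //=; by rewrite ?Px ?andbT ?andbF.
  by rewrite cardsU1 inE (negbTE xt).
have -> : [set w in x |: t | (rk w < rk v)%N] = [set w in t | (rk w < rk v)%N].
  apply/setP => w; rewrite !inE; case: eqP => [->|] //=; by rewrite ?Px ?andbT ?andbF ?(negbTE xt).
by [].
Qed.

Lemma fsignU1_self (v : V) (t : {set V}) : v \notin t -> fsign v (v |: t) = fsign v t.
Proof. by move=> vt; rewrite fsignU1 // ltnn expr0 mul1r. Qed.

Lemma sign_rank_swap (u v : V) : u != v ->
  (-1) ^+ (rk u < rk v)%N * (-1) ^+ (rk v < rk u)%N = - 1 :> K.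
Proof.
move=> uv; case: (ltngtP (rk u) (rk v)) => H; rewrite ?expr0 ?expr1 ?mulr1 ?mul1r //.
by move: uv; rewrite -(inj_eq enum_rank_inj) -(inj_eq val_inj) /= H eqxx.
Qed.

Lemma fsign_cone (v w : V) (s : {set V}) : v != w -> v \notin s -> w \in s ->
  fsign v (v |: s) * fsign w (v |: s) = - (fsign w s * fsign v (v |: (s :\ w))).
Proof.
move=> vw vs ws.
have vs' : v \notin s :\ w by rewrite inE negb_and vs orbT.
have ws' : w \notin s :\ w by rewrite !inE eqxx.
rewrite fsignU1_self // fsignU1_self // fsignU1 // -{1}(setD1K ws) fsignU1 //.
rewrite mulrCA mulrA mulrA sign_rank_swap 1?eq_sym //.
  by rewrite mulN1r mulNr mulrC.
by rewrite eq_sym.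
Qed.

Lemma fsign_swap (u v : V) (r : {set V}) : u != v -> u \notin r -> v \notin r ->
  fsign v (v |: r) * fsign u (u |: (v |: r)) = - (fsign u (u |: r) * fsign v (v |: (u |: r))).
Proof.
move=> uv ur vr.
have uvr : u \notin v |: r by rewrite !inE negb_or uv.
have vur : v \notin u |: r by rewrite !inE negb_or eq_sym uv.
rewrite !fsignU1_self // fsignU1 ?inE 1?eq_sym // fsignU1 //.
have E : (-1) ^+ (rk v < rk u)%N = - (-1) ^+ (rk u < rk v)%N :> K.
  have := sign_rank_swap uv; set a := (-1) ^+ _; set b := (-1) ^+ _ => H.
  have aa : a * a = 1 by rewrite /a -exprD -signr_odd oddD addbb.
  by rewrite -[b]mul1r -aa -mulrA H mulrN1.
rewrite E; ring.
Qed.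

(* The coefficient of the basis element tau in the multidegree-a component of
   c.  On these coefficients the homogenized boundary acts as the simplicial
   boundary of Delta_{<=a} (strand_bnd). *)
Definition strand (c : chain) tau (a : 'X_{1..n}) : K :=
  if lem (fl tau) a then (c tau)@_(mnm_sub a (fl tau)) else 0.

Lemma mcoeffMX_eq0 (p : {mpoly K[n]}) g d : ~~ lem g d -> (p * 'X_[g])@_d = 0.
Proof.
move=> H; apply: memN_msupp_eq0; rewrite (perm_mem (msuppMX p g)).
by apply/mapP => [[m' _ E]]; move: H; rewrite E lem_addr.
Qed.

Lemma strand_bnd (c : chain) (s : {set V}) a :
  strand (bnd lab c) s a = \sum_(v | v \notin s) fsign v (v |: s) * strand c (v |: s) a.
Proof.
rewrite /strand /bnd ffunE; case: ifP => Hs.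
  rewrite raddf_sum /=; apply: eq_bigr => v _.
  rewrite face_signE -mulrA [_ * c _]mulrC mcoeffCM; congr (_ * _).
  have Hvs := face_lab_mono (subsetUr [set v] s).
  case: ifP => Hvsa.
    have -> : mnm_sub a (fl s) =
              mnm_add (mnm_sub (fl (v |: s)) (fl s)) (mnm_sub a (fl (v |: s))).
      apply/mnmP => i; rewrite !mnmE.
      move/mnm_lepP: Hvs => /(_ i); move/mnm_lepP: Hvsa => /(_ i); lia.
    by rewrite mcoeffMX.
  apply: mcoeffMX_eq0; apply: contraFN Hvsa => /mnm_lepP H; apply/mnm_lepP => i.
  move: (H i); rewrite !mnmE.
  move/mnm_lepP: Hvs => /(_ i); move/mnm_lepP: Hs => /(_ i); lia.
rewrite big1 // => v _; case: ifP; rewrite ?mulr0 //.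
by move=> H; rewrite (lepm_trans (face_lab_mono (subsetUr [set v] s)) H) in Hs.
Qed.

Lemma strand_inj (c d : chain) : (forall t a, strand c t a = strand d t a) -> c = d.
Proof.
move=> H; apply/ffunP => t; apply/mpolyP => b.
by have := H t (mnm_add b (fl t)); rewrite /strand lem_addl addmK.
Qed.

Lemma strand0 t a : strand (0 : chain) t a = 0.
Proof. by rewrite /strand ffunE mcoeff0; case: ifP. Qed.

Lemma strand_neq0 (c : chain) (t : {set V}) a :
  strand c t a != 0 -> c t != 0 /\ lem (fl t) a.
Proof.
rewrite /strand; case: ifP => H; rewrite ?eqxx //.
by move=> nz; split=> //; apply: contraNneq nz => ->; rewrite mcoeff0.
Qed.

Lemma chain_strand_neq0 (c : chain) t : c t != 0 -> exists a, strand c t a != 0.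
Proof.
rewrite -msupp_eq0; case E: (msupp (c t)) => [//|b s] _.
exists (mnm_add b (fl t)); rewrite /strand lem_addl addmK.
by rewrite mcoeff_eq0 negbK E mem_head.
Qed.

(* The terms removing u then v and v then u cancel (fsign_swap). *)
Lemma bnd_bnd (c : chain) : bnd lab (bnd lab c) = 0.
Proof.
apply: strand_inj => r a; rewrite strand0 strand_bnd.
under eq_bigr do rewrite strand_bnd mulr_sumr.
rewrite pair_big_dep /=.
set P := fun p : V * V => (p.1 \notin r) && (p.2 \notin p.1 |: r).
set F := fun p : V * V => fsign p.1 (p.1 |: r) *
   (fsign p.2 (p.2 |: (p.1 |: r)) * strand c (p.2 |: (p.1 |: r)) a).
rewrite (bigID (fun p : V * V => (rk p.1 < rk p.2)%N)) /=.
rewrite [X in _ + X](reindex_inj (can_inj swap_pairK)) /=.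
rewrite [X in _ + X](eq_bigl (fun p => P p && (rk p.1 < rk p.2)%N)); last first.
  move=> p; rewrite /P /swap_pair /= !inE !negb_or.
  case: (ltngtP (rk p.1) (rk p.2)) => H; rewrite ?andbT ?andbF //=.
  - by rewrite eq_sym; case: (p.1 \notin r); case: (p.2 \notin r); rewrite ?andbF.
  - by rewrite -(inj_eq enum_rank_inj) -(inj_eq val_inj) /= H eqxx !andbF.
rewrite [X in _ + X](eq_bigr (fun p => - F p)); first by rewrite sumrN addrN.
case=> u v /andP [] /andP [] /= ur; rewrite !inE negb_or => /andP [vu vr] _.
by rewrite /F /= mulrA fsign_swap 1?eq_sym // mulNr -mulrA setUCA.
Qed.

Lemma augm_bnd (c : chain) : augm lab c = bnd lab c set0.
Proof.
rewrite /augm /bnd ffunE; apply: eq_big => [v|v _]; first by rewrite inE.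
rewrite setU0 face_signE face_lab1 face_lab0 subm0 mulrC; congr (_ * _).
rewrite (_ : fsign v [set v] = 1) ?mul1r //.
rewrite /fsign (_ : [set w in [set v] | _] = set0) ?cards0 ?expr0 //.
by apply/setP => w; rewrite !inE; case: eqP => // ->; rewrite ltnn.
Qed.

Hypothesis Delta_down : forall s t : {set V}, s \subset t -> t \in Delta -> s \in Delta.

Lemma chain_bnd k (c : chain) : is_chain Delta k.+1 c -> is_chain Delta k (bnd lab c).
Proof.
move=> Hc s nz.
suff: (s \in Delta) && (#|s| == k.+1) by case/andP => -> /eqP.
apply: contraTT nz => Hn; rewrite negbK ffunE; apply/eqP; apply: big1 => v vs.
case: (eqVneq (c (v |: s)) 0) => [->|/Hc [HD Hcard]]; first by rewrite mulr0.
move: Hn; rewrite (Delta_down (subsetUr _ _) HD) /=.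
by move: Hcard; rewrite cardsU1 vs /= add1n => -[->]; rewrite eqxx.
Qed.

Lemma bnd_chain0 (c : chain) s : is_chain Delta 0 c -> s != set0 -> bnd lab c s = 0.
Proof.
move=> Hc s0; rewrite ffunE; apply: big1 => v vs.
case: (eqVneq (c (v |: s)) 0) => [->|/Hc [_ Hcard]]; first by rewrite mulr0.
move: Hcard; rewrite cardsU1 vs add1n => -[] /eqP; rewrite cards_eq0.
by rewrite (negbTE s0).
Qed.

Definition cone_apex a w := lem (lab w) a &&
  [forall t : {set V}, ((t \in Delta) && lem (fl t) a) ==> ((w |: t) \in Delta)].

Lemma cone_apexI a w : lem (lab w) a ->
  (forall t, t \in Delta -> lem (fl t) a -> (w |: t) \in Delta) -> cone_apex a w.
Proof.
move=> wa Hw; rewrite /cone_apex wa; apply/forallP => t.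
by apply/implyP => /andP [tD ta]; apply: Hw.
Qed.

Hypothesis lower_cone : forall a (t0 : {set V}),
  t0 \in Delta -> t0 != set0 -> lem (fl t0) a -> exists w, cone_apex a w.

Definition apex a := [pick w | cone_apex a w].

Definition cone_strand (c : chain) (t : {set V}) a :=
  if apex a is Some w then (if w \in t then fsign w t * strand c (t :\ w) a else 0) else 0.

Definition chain_degs (c : chain) := undup (flatten
  [seq [seq mnm_add b (fl t) | b <- msupp (c t)] | t <- enum [set: {set V}]]).

(* The contraction s |-> +-(s :|: w) of the cone Delta_{<=a} with apex w,
   applied strand by strand; chain_degs c holds every multidegree in which c
   has a nonzero strand. *)
Definition cone_chain (c : chain) : chain :=
  [ffun t => \sum_(a <- chain_degs c | lem (fl t) a)
               cone_strand c t a *: 'X_[mnm_sub a (fl t)]].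

Lemma mem_chain_degs (c : chain) (t : {set V}) a : strand c t a != 0 -> a \in chain_degs c.
Proof.
move=> /[dup] H /strand_neq0 [_ le]; rewrite mem_undup; apply/flattenP.
exists [seq mnm_add b (fl t) | b <- msupp (c t)].
  by apply/mapP; exists t; rewrite ?mem_enum ?inE.
apply/mapP; exists (mnm_sub a (fl t)); last by rewrite submK.
by move: H; rewrite /strand le mcoeff_msupp.
Qed.

Lemma cone_strand_neq0 (c : chain) (t : {set V}) a : cone_strand c t a != 0 ->
  exists w, [/\ apex a = Some w, cone_apex a w, w \in t & strand c (t :\ w) a != 0].
Proof.
rewrite /cone_strand; case E: (apex a) => [w|]; last by rewrite eqxx.
case: ifP => wt; last by rewrite eqxx.
move=> nz; exists w; split=> //; last by apply: contraNneq nz => ->; rewrite mulr0.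
by move: E; rewrite /apex; case: pickP => // x Hx [<-].
Qed.

Lemma cone_strand_supp (c : chain) (t : {set V}) a : cone_strand c t a != 0 ->
  lem (fl t) a /\ a \in chain_degs c.
Proof.
move=> /cone_strand_neq0 [w [_ /andP [lw _] wt nz]].
split; last exact: mem_chain_degs nz.
have [_ le] := strand_neq0 nz; rewrite lem_face_lab; apply/forall_inP => v vt.
case: (eqVneq v w) => [->//|vw].
by move: le; rewrite lem_face_lab => /forall_inP; apply; rewrite !inE vw.
Qed.

Lemma strand_cone_chain (c : chain) (t : {set V}) a :
  strand (cone_chain c) t a = cone_strand c t a.
Proof.
case: (eqVneq (cone_strand c t a) 0) => [E|nz]; last first.
  have [le aA] := cone_strand_supp nz.
  rewrite /strand le /cone_chain ffunE raddf_sum /= big_mkcond.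
  rewrite (bigD1_seq a) ?undup_uniq //= le.
  rewrite mcoeffZ mcoeffX eqxx mulr1 big1 ?addr0 // => b ba.
  case: ifP => // le'.
  rewrite mcoeffZ mcoeffX; case: eqP; rewrite ?mulr0 // => E.
  by move: ba; rewrite -(submK le) -(submK le') E eqxx.
rewrite E /strand; case: ifP => // le.
rewrite /cone_chain ffunE raddf_sum /= big1_seq // => b /andP [le' bA].
rewrite mcoeffZ mcoeffX; case: eqP; rewrite ?mulr0 // => Eb.
have -> : b = a by rewrite -(submK le) -(submK le') Eb.
by rewrite E mul0r.
Qed.

Lemma strand_no_apex k (c : chain) s a :
  is_chain Delta k c -> apex a = None -> strand c s a = 0.
Proof.
move=> Hc E; apply/eqP; apply: contraT => nz.
have [/Hc [sD scard] le] := strand_neq0 nz.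
have s0 : s != set0 by rewrite -card_gt0 scard.
have [w Hw] := lower_cone sD s0 le.
by move: E; rewrite /apex; case: pickP => // /(_ w); rewrite Hw.
Qed.

Lemma setD1U1 (v w : V) (s : {set V}) : v != w -> (v |: s) :\ w = v |: (s :\ w).
Proof.
move=> vw; apply/setP => x; rewrite !inE; case: (eqVneq x v) => [->|] //=.
by rewrite vw.
Qed.

Lemma bnd_cone_chain k (c : chain) : is_chain Delta k c -> bnd lab c = 0 ->
  bnd lab (cone_chain c) = c.
Proof.
move=> Hc Hb; apply: strand_inj => s a; rewrite strand_bnd.
under eq_bigr do rewrite strand_cone_chain.
rewrite /cone_strand; case E: (apex a) => [w|]; last first.
  by rewrite (strand_no_apex s Hc E) big1 // => v _; rewrite mulr0.
case: (boolP (w \in s)) => ws; last first.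
  rewrite (bigD1 w) //= big1 => [|v /andP [vs vw]]; last first.
    by rewrite !inE eq_sym (negbTE vw) /= (negbTE ws) mulr0.
  by rewrite addr0 setU11 setU1K // mulrA fsignK mul1r.
have cycle : \sum_(v | v \notin s :\ w)
    fsign v (v |: (s :\ w)) * strand c (v |: (s :\ w)) a = 0.
  by rewrite -strand_bnd Hb strand0.
move: cycle; rewrite (bigD1 w) ?inE ?eqxx //= setD1K // => cycle.
have cycleD1 : \sum_(v | v \notin s) fsign v (v |: (s :\ w)) * strand c (v |: (s :\ w)) a
    = - (fsign w s * strand c s a).
  move/eqP: cycle; rewrite addrC addr_eq0 => /eqP <-.
  apply: eq_bigl => v; rewrite !inE negb_and negbK.
  by case: (eqVneq v w) => [->|]; rewrite ?ws //= andbT.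
transitivity (- fsign w s *
    \sum_(v | v \notin s) fsign v (v |: (s :\ w)) * strand c (v |: (s :\ w)) a).
  rewrite mulr_sumr; apply: eq_bigr => v vs.
  have vw : v != w by apply: contraNneq vs => ->.
  rewrite !inE eq_sym (negbTE vw) ws /= setD1U1 // mulrA fsign_cone //.
  by rewrite !mulNr mulrA.
by rewrite cycleD1 mulNr mulrN opprK mulrA fsignK mul1r.
Qed.

Lemma chain_cone_chain k (c : chain) : is_chain Delta k c -> is_chain Delta k.+1 (cone_chain c).
Proof.
move=> Hc t /chain_strand_neq0 [a]; rewrite strand_cone_chain.
case/cone_strand_neq0 => w [_ /andP [_ /forall_inP Hw] wt nz].
have [/Hc [tD tcard] le] := strand_neq0 nz.
have := Hw _ (introT andP (conj tD le)); rewrite setD1K // => tDelta.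
by split => //; rewrite (cardsD1 w t) wt tcard.
Qed.

Lemma cycle_is_boundary k (c : chain) : is_chain Delta k c -> bnd lab c = 0 ->
  exists b, is_chain Delta k.+1 b /\ bnd lab b = c.
Proof.
move=> Hc Hb; exists (cone_chain c); split; first exact: chain_cone_chain.
exact: bnd_cone_chain Hc Hb.
Qed.

Theorem cone_supports_free_resolution (J : {mpoly K[n]} -> Prop) :
  (forall p, J p <-> exists c, is_chain Delta 0 c /\ augm lab c = p) ->
  supports_free_resolution Delta lab J.
Proof.
move=> J_augm; split=> //; split.
  move=> c; split.
    case=> Hc Ha; apply: (cycle_is_boundary Hc); apply/ffunP => s; rewrite [RHS]ffunE.
    case: (eqVneq s set0) => [->|s0]; first by rewrite -augm_bnd.
    exact: bnd_chain0.
  case=> b [Hb <-]; split; first exact: chain_bnd.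
  by rewrite augm_bnd bnd_bnd ffunE.
move=> k c; split; first by case=> Hc Hb; apply: cycle_is_boundary.
by case=> b [Hb <-]; split; [apply: chain_bnd | apply: bnd_bnd].
Qed.

End HomogenizedComplex.

Lemma lem_add_sq n (a b c : 'X_{1..n}) :
  lem (mnm_add a a) c -> lem (mnm_add b b) c -> lem (mnm_add a b) c.
Proof.
move=> /mnm_lepP H1 /mnm_lepP H2; apply/mnm_lepP => k.
by move: (H1 k) (H2 k); rewrite !mnmDE; lia.
Qed.

Section InducedSubcomplex.
Variables (n q : nat) (m : 'I_q -> 'X_{1..n}).
Local Notation V := (Vtx q).

Definition offdiag (x : V) := ((val x).1 < (val x).2)%N.

Lemma diag_of (x : V) : ~~ offdiag x -> (val x).1 = (val x).2.
Proof. by move=> H; apply/val_inj/eqP; rewrite eqn_leq (valP x) leqNgt H. Qed.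

Lemma in_Mfacet (x : V) i :
  (x \in Mfacet i) = offdiag x || (((val x).1 == i) && ((val x).2 == i)).
Proof. by rewrite inE. Qed.

Lemma vtx_exists (i j : 'I_q) : exists x : V, val x = (i, j) \/ val x = (j, i).
Proof.
case: (leqP i j) => H; first by exists (Sub (i, j) H); left.
by exists (Sub (j, i) (ltnW H)); right.
Qed.

Lemma vlab_pair (x : V) i j :
  val x = (i, j) \/ val x = (j, i) -> vlab m x = mnm_add (m i) (m j).
Proof. by rewrite /vlab; case=> ->; rewrite // addmC. Qed.

Lemma offdiag_pair (x : V) (i j : 'I_q) :
  i != j -> val x = (i, j) \/ val x = (j, i) -> offdiag x.
Proof.
move=> ij Hx; rewrite /offdiag ltn_neqAle (valP x) andbT.
by case: Hx => -> /=; rewrite (inj_eq val_inj) // eq_sym.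
Qed.

Lemma augm_ideal_sq (K : fieldType) (c : {ffun {set V} -> {mpoly K[n]}}) :
  ideal_sq m (augm (vlab m) c).
Proof.
exists (fun i j => if @insub _ (fun p : 'I_q * 'I_q => (p.1 <= p.2)%N) V (i, j) is Some v
   then c [set v] else 0).
rewrite pair_big /= (bigID (fun p : 'I_q * 'I_q => (p.1 <= p.2)%N)) /=.
rewrite [X in _ = _ + X]big1 ?addr0 => [|p /negbTE np]; last first.
  by rewrite insubF //= mul0r.
rewrite [RHS](@reindex_omap _ _ _ _ V val insub) => [|p pP]; last by rewrite insubT.
rewrite /augm; apply: eq_big => [v|v _]; first by rewrite (valP v) valK eqxx.
by rewrite -surjective_pairing valK.
Qed.

Variables (G : pred V) (Delta : pred {set V}).
Hypothesis Delta_induced : forall t, (t \in Delta) = Mq2 t && [forall x in t, G x].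

Lemma induced_down_closed (s t : {set V}) : s \subset t -> t \in Delta -> s \in Delta.
Proof.
move=> st; rewrite !Delta_induced => /andP [/existsP [i ti] /forall_inP Gt].
apply/andP; split; first by apply/existsP; exists i; apply: subset_trans ti.
by apply/forall_inP => x xs; apply: Gt; apply: (subsetP st).
Qed.

Lemma offdiag_induced_apex (x : V) t : G x -> offdiag x -> t \in Delta -> (x |: t) \in Delta.
Proof.
move=> Gx offx; rewrite !Delta_induced => /andP [/existsP [i ti] /forall_inP Gt].
apply/andP; split.
  by apply/existsP; exists i; rewrite subUset sub1set ti andbT in_Mfacet offx.
by apply/forall_inP => y; rewrite !inE => /orP [/eqP ->|/Gt].
Qed.

Hypothesis diag_pair_offdiag : forall a (i k : 'I_q), i != k ->
  lem (mnm_add (m i) (m i)) a -> lem (mnm_add (m k) (m k)) a ->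
  exists x, [/\ G x, offdiag x & lem (vlab m x) a].

Lemma diag_induced_apex a (u : V) t :
  ~~ [exists x, [&& G x, offdiag x & lem (vlab m x) a]] ->
  G u -> (val u).1 = (val u).2 -> lem (vlab m u) a ->
  t \in Delta -> lem (face_lab (vlab m) t) a -> (u |: t) \in Delta.
Proof.
move=> /existsPn Hno Gu du ua; rewrite !Delta_induced.
move=> /andP [/existsP [j tj] /forall_inP Gt] ta; apply/andP; split; last first.
  by apply/forall_inP => y; rewrite !inE => /orP [/eqP ->|/Gt].
apply/existsP; exists (val u).1; rewrite subUset sub1set in_Mfacet du eqxx /= orbT /=.
apply/subsetP => y yt; have ya : lem (vlab m y) a.
  by move: ta; rewrite lem_face_lab => /forall_inP; apply.
have := subsetP tj _ yt; rewrite !in_Mfacet => /orP [offy|/andP [/eqP y1 /eqP y2]].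
  by move: (Hno y); rewrite Gt // offy ya.
rewrite y1 y2; case: (eqVneq j (sval u).2) => [_|ju]; first by rewrite orbT.
have uy : (val u).1 != (val y).1 by rewrite y1 du eq_sym.
have ua2 : lem (mnm_add (m (val u).1) (m (val u).1)) a by move: ua; rewrite /vlab -du.
have ya2 : lem (mnm_add (m (val y).1) (m (val y).1)) a.
  by move: ya; rewrite /vlab -(etrans y1 (esym y2)).
have [x [Gx offx xa]] := diag_pair_offdiag uy ua2 ya2.
by move: (Hno x); rewrite Gx offx xa.
Qed.

Lemma induced_lower_cone a (t0 : {set V}) : t0 \in Delta -> t0 != set0 ->
  lem (face_lab (vlab m) t0) a -> exists w, cone_apex Delta (vlab m) a w.
Proof.
move=> t0D t00 t0a.
case: (boolP [exists x, [&& G x, offdiag x & lem (vlab m x) a]]) => [|Hno].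
  case/existsP => x /and3P [Gx offx xa]; exists x; apply: cone_apexI => // t tD _.
  exact: offdiag_induced_apex.
have [u ut0] := set0Pn _ t00.
move: t0D; rewrite Delta_induced => /andP [_ /forall_inP Gt0].
have Gu := Gt0 _ ut0.
have ua : lem (vlab m u) a by move: t0a; rewrite lem_face_lab => /forall_inP; apply.
have offu : ~~ offdiag u.
  by apply: contraNN Hno => offu; apply/existsP; exists u; rewrite Gu offu ua.
exists u; apply: cone_apexI => // t.
exact: diag_induced_apex Hno Gu (diag_of offu) ua.
Qed.

Hypothesis G_below : forall i j : 'I_q,
  exists z, G z /\ lem (vlab m z) (mnm_add (m i) (m j)).

Lemma set1_induced (z : V) : G z -> [set z] \in Delta.
Proof.
move=> Gz; rewrite Delta_induced; apply/andP; split.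
  apply/existsP; exists (val z).1; rewrite sub1set in_Mfacet eqxx /=.
  by case: (boolP (offdiag z)) => // /diag_of ->; rewrite eqxx.
by apply/forall_inP => x; rewrite inE => /eqP ->.
Qed.

Variable K : fieldType.

Lemma ideal_sq_augm (p : {mpoly K[n]}) : ideal_sq m p ->
  exists c, is_chain Delta 0 c /\ augm (vlab m) c = p.
Proof.
case=> a ->.
pose z i j := [pick z | G z && lem (vlab m z) (mnm_add (m i) (m j))].
pose E i j : {ffun {set V} -> {mpoly K[n]}} := if z i j is Some w then
   [ffun t => if t == [set w]
              then a i j * 'X_[mnm_sub (mnm_add (m i) (m j)) (vlab m w)] else 0]
   else 0.
exists (\sum_i \sum_j E i j); split.
  move=> t nzt.
  suff: (t \in Delta) && (#|t| == 1%N) by case/andP => -> /eqP.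
  apply: contraTT nzt => Hn; rewrite negbK !sum_ffunE; apply/eqP.
  apply: big1 => i _; rewrite sum_ffunE; apply: big1 => j _.
  rewrite /E /z; case: pickP => [w /andP [Gw _]|]; last by rewrite ffunE.
  rewrite ffunE; case: eqP => // tw.
  by move: Hn; rewrite tw set1_induced // cards1 eqxx.
rewrite /augm; under eq_bigr do rewrite !sum_ffunE mulr_suml.
rewrite exchange_big; apply: eq_bigr => i _.
under eq_bigr do rewrite sum_ffunE mulr_suml.
rewrite exchange_big; apply: eq_bigr => j _.
rewrite /E /z; case: pickP => [w /andP [Gw le]|H]; last first.
  by have [w [Gw le]] := G_below i j; move: (H w); rewrite Gw le.
rewrite (bigD1 w) //= big1 => [|v vw]; last first.
  by rewrite ffunE (inj_eq set1_inj) (negbTE vw) mul0r.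
by rewrite ffunE eqxx addr0 -mulrA -mpolyXD submK.
Qed.

Theorem induced_supports_free_resolution :
  supports_free_resolution Delta (vlab m) (@ideal_sq K n q m).
Proof.
apply: cone_supports_free_resolution.
- exact: induced_down_closed.
- exact: induced_lower_cone.
- move=> p; split; first exact: ideal_sq_augm.
  by case=> c [_ <-]; apply: augm_ideal_sq.
Qed.

End InducedSubcomplex.

Theorem Mq2_supports_free_resolution (K : fieldType) (n q : nat) (m : 'I_q -> 'X_{1..n}) :
  supports_free_resolution (Mq2 (q:=q)) (vlab m) (@ideal_sq K n q m).
Proof.
apply: (@induced_supports_free_resolution _ _ m predT).
- by move=> t; rewrite [X in _ && X](_ : _ = true) ?andbT //; apply/forall_inP.
- move=> a i k ik ia ka; have [x Hx] := vtx_exists i k.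
  exists x; split => //; first exact: offdiag_pair ik Hx.
  by rewrite (vlab_pair m Hx); apply: lem_add_sq.
- move=> i j; have [x Hx] := vtx_exists i j; exists x; split => //.
  by rewrite (vlab_pair m Hx) lepm_refl.
Qed.

Section M2I.
Variables (n q : nat) (m : 'I_q -> 'X_{1..n}).
Hypothesis m_min : minimal_gens m.
Local Notation V := (Vtx q).

Lemma gens_inj (i j : 'I_q) : m i = m j -> i = j.
Proof.
move=> E; apply/eqP; apply: contraT => ij; have := m_min ij.
by rewrite E lepm_refl.
Qed.

Lemma set2_cases (a b c d : 'I_q) : [set a; b] = [set c; d] ->
  (a = c /\ b = d) \/ (a = d /\ b = c).
Proof.
move=> E.
have mem x : (x \in [set a; b]) = (x \in [set c; d]) by rewrite E.
have /set2P Ha : a \in [set c; d] by rewrite -mem set21.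
have /set2P Hb : b \in [set c; d] by rewrite -mem set22.
have /set2P Hc : c \in [set a; b] by rewrite mem set21.
have /set2P Hd : d \in [set a; b] by rewrite mem set22.
case: Ha => ?; case: Hb => ?; case: Hc => ?; case: Hd => ?; subst;
  by [left; split | right; split].
Qed.

Lemma set2_addm (a b c d : 'I_q) : [set a; b] = [set c; d] ->
  mnm_add (m a) (m b) = mnm_add (m c) (m d).
Proof. by case/set2_cases => [[-> ->]|[-> ->]] //; rewrite addmC. Qed.

Lemma set2_min (a b c d : 'I_q) :
  (a <= b)%N -> (c <= d)%N -> [set a; b] = [set c; d] -> a = c.
Proof.
move=> ab cd E.
have mem x : (x \in [set a; b]) = (x \in [set c; d]) by rewrite E.
move: (mem a) (mem c); rewrite !inE !eqxx /= ?orbT => /esym /orP Ha /orP Hc.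
apply/val_inj/eqP; rewrite eqn_leq; apply/andP; split.
  by case: Hc => /eqP ->.
by case: Ha => /eqP ->.
Qed.

(* A deletion either keeps the label and raises the smaller index, or
   strictly lowers the degree of the label. *)
Definition deletion_rank (x : V) := (mdeg (vlab m x) * q.+1 + (q - (val x).1))%N.

Lemma deleted_descent (x : V) : deleted m x ->
  exists y : V, lem (vlab m y) (vlab m x) /\ (deletion_rank y < deletion_rank x)%N.
Proof.
move=> /existsP [i /existsP [j /existsP [u /existsP [v /and3P [neq le]]]]].
case/orP => [/and5P [/eqP eq ij iu iv /eqP sx] | /andP [ne /eqP sx]].
  have [y Hy] := vtx_exists u v.
  have ly := vlab_pair m Hy.
  have lx : vlab m x = mnm_add (m i) (m j) by apply: set2_addm.
  have x1 : (val x).1 = i by apply: set2_min sx => //; exact: (valP x).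
  have ui : u != i.
    apply: contraNneq neq => Eu; subst u.
    have Ej : m j = m v by apply: (@addmI _ (m i)).
    by rewrite (gens_inj Ej).
  have vi : v != i.
    apply: contraNneq neq => Ev; subst v.
    have Ej : m j = m u by apply: (@addmI _ (m i)); rewrite eq addmC.
    by rewrite (gens_inj Ej) setUC.
  have y1 : (i < (val y).1)%N.
    rewrite ltn_neqAle; case: Hy => -> /=.
      by rewrite iu andbT eq_sym (inj_eq val_inj).
    by rewrite iv andbT eq_sym (inj_eq val_inj).
  exists y; rewrite lx eq -ly lepm_refl; split => //.
  rewrite /deletion_rank ly -eq -lx x1.
  have := ltn_ord (val y).1; lia.
have [y Hy] := vtx_exists i j.
have ly := vlab_pair m Hy.
have lx : vlab m x = mnm_add (m u) (m v) by apply: set2_addm.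
set d := mnm_sub (mnm_add (m u) (m v)) (mnm_add (m i) (m j)).
have d_gt0 : (0 < mdeg d)%N.
  rewrite lt0n mdeg_eq0; apply: contra ne => /eqP d0.
  by rewrite -(submK le) -/d d0 add0m.
have ltd : (mdeg (vlab m y) < mdeg (vlab m x))%N.
  by rewrite ly lx -(submK le) -/d (mdegD d); lia.
exists y; split; first by rewrite ly lx.
rewrite /deletion_rank; nia.
Qed.

Lemma survivor_below (x : V) : exists z : V, ~~ deleted m z /\ lem (vlab m z) (vlab m x).
Proof.
move: {2}(deletion_rank x).+1 (ltnSn (deletion_rank x)) => N.
elim: N x => // N IH x ltx.
case: (boolP (deleted m x)) => [/deleted_descent [y [yx lty]]|nx].
  have [z [nz zy]] := IH y (leq_trans lty ltx).
  by exists z; split => //; apply: lepm_trans zy yx.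
by exists x; rewrite nx lepm_refl.
Qed.

Lemma M2I_below (i j : 'I_q) :
  exists z : V, ~~ deleted m z /\ lem (vlab m z) (mnm_add (m i) (m j)).
Proof.
have [x Hx] := vtx_exists i j; have [z [nz lz]] := survivor_below x.
by exists z; split => //; rewrite -(vlab_pair m Hx).
Qed.

Definition excess (i k : 'I_q) := (\sum_(c < n) (m k c - m i c))%N.

Lemma excess_gt0 (i k : 'I_q) : k != i -> (0 < excess i k)%N.
Proof.
move=> ki; rewrite lt0n sum_nat_eq0; apply: contra (m_min ki) => /forallP E0.
by apply/mnm_lepP => c; move: (E0 c) => /eqP; lia.
Qed.

Lemma excess_sq_le (i k k' : 'I_q) :
  lem (mnm_add (m k') (m k')) (mnm_add (m i) (m k)) -> (2 * excess i k' <= excess i k)%N.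
Proof.
move=> le; rewrite /excess big_distrr /=; apply: leq_sum => c _.
by move/mnm_lepP: le => /(_ c); rewrite !mnmDE; lia.
Qed.

Lemma sq_le_neq (i k k' : 'I_q) : i != k ->
  lem (mnm_add (m k') (m k')) (mnm_add (m i) (m k)) -> i != k'.
Proof.
move=> ik le; apply/eqP => Eik; move: le; rewrite -Eik => /mnm_lepP le.
apply: (negP (m_min ik)); apply/mnm_lepP => c.
by move: (le c); rewrite !mnmDE; lia.
Qed.

Lemma M2I_diag_pair a (i k : 'I_q) : i != k ->
  lem (mnm_add (m i) (m i)) a -> lem (mnm_add (m k) (m k)) a ->
  exists x : V, [/\ ~~ deleted m x, offdiag x & lem (vlab m x) a].
Proof.
move=> ik ia ka.
case: (boolP [exists x : V, [&& ~~ deleted m x, offdiag x & lem (vlab m x) a]]).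
  by case/existsP => x /and3P [? ? ?]; exists x.
move=> /existsPn Hno; exfalso.
move: {2}(excess i k).+1 (ltnSn (excess i k)) => N.
elim: N k ik ka => // N IH k ik ka ltk.
have [x Hx] := vtx_exists i k.
have xa : lem (vlab m x) a by rewrite (vlab_pair m Hx); apply: lem_add_sq.
have [z [nz zx]] := survivor_below x.
have za := lepm_trans zx xa.
have offz : ~~ offdiag z by apply: contraNN (Hno z) => offz; rewrite nz offz za.
have zik : lem (mnm_add (m (val z).1) (m (val z).1)) (mnm_add (m i) (m k)).
  by move: zx; rewrite (vlab_pair m Hx) /vlab -(diag_of offz).
have za2 : lem (mnm_add (m (val z).1) (m (val z).1)) a.
  by move: za; rewrite /vlab -(diag_of offz).
apply: (IH _ (sq_le_neq ik zik) za2).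
have := excess_sq_le zik; have : (0 < excess i k)%N by apply: excess_gt0; rewrite eq_sym.
lia.
Qed.

Theorem M2I_supports_free_resolution (K : fieldType) :
  supports_free_resolution (M2I m) (vlab m) (@ideal_sq K n q m).
Proof.
apply: (@induced_supports_free_resolution _ _ m (fun x => ~~ deleted m x)) => //.
- exact: M2I_diag_pair.
- exact: M2I_below.
Qed.

End M2I.

Theorem theorem1 (K : fieldType) (n q : nat) (m : 'I_q -> 'X_{1..n}) :
  minimal_gens m ->
  supports_free_resolution (Mq2 (q:=q)) (vlab m) (@ideal_sq K n q m)
  /\ supports_free_resolution (M2I m) (vlab m) (@ideal_sq K n q m).
Proof.
move=> m_min; split; first exact: Mq2_supports_free_resolution.
exact: M2I_supports_free_resolution.
Qed.
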